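(* Let $\mathcal A\subset\mathbb{R}$ be a finite, non-empty set with $|\mathcal A+\mathcal A|=K|\mathcal A|$ for some $K\ge 1$. Then \[ \sup_{n\in\mathbb{Z}} r_{\mathcal A}(n)\le r_{\mathcal A}(0)\ll K^2|\mathcal A|^2\log(2|\mathcal A|) \qquad\text{and}\qquad I_3(\mathcal A)\ll K^4|\mathcal A|^8(\log(2|\mathcal A|))^2, \] with absolute implied constants.
   Context: $\mathcal A+\mathcal A=\{a+b:a,b\in\mathcal A\}$. For $n\in\mathbb{Z}$, $r_{\mathcal A}(n)$ is the number of $(a_1,a_2,a_3,a_4)\in\mathcal A^4$ with $a_1a_2-a_3a_4=n$, and $I_3(\mathcal A)=\sum_{n\in\mathbb{Z}} r_{\mathcal A}(n)^3$. *)

From HB Require Import structures.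
From mathcomp Require Import all_boot all_order all_algebra.
From mathcomp Require Import reals exp.
Set Implicit Arguments. Unset Strict Implicit. Unset Printing Implicit Defensive.
Import Order.TTheory GRing.Theory Num.Theory.
Local Open Scope ring_scope.

Section Defs.
Variable R : realType.

Definition sumset (A : seq R) : seq R := undup [seq a + b | a <- A, b <- A].

Definition quad_vals (A : seq R) : seq R :=
  [seq p.1 - p.2 | p <- [seq (x, y) | x <- [seq a1 * a2 | a1 <- A, a2 <- A],
                                       y <- [seq a3 * a4 | a3 <- A, a4 <- A]]].

Definition rA (A : seq R) (n : int) : nat :=
  count (fun d => d == n%:~R) (quad_vals A).

(* the (finite) set of integers n with r_A(n) > 0 *)
Definition rA_support (A : seq R) : seq int :=
  undup [seq Num.floor d | d <- quad_vals A & d \is a Num.int].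

(* I_3(A) = sum_{n in Z} r_A(n)^3 ; terms outside rA_support vanish *)
Definition I3 (A : seq R) : nat := \sum_(n <- rA_support A) (rA A n) ^ 3.
End Defs.

From HB Require Import structures.
From mathcomp Require Import all_boot all_order all_algebra.
From mathcomp Require Import reals exp.
From mathcomp Require Import zify ring lra.
Set Implicit Arguments. Unset Strict Implicit. Unset Printing Implicit Defensive.
Import Order.TTheory GRing.Theory Num.Theory.

(* Let P be the list of products a1 a2 with a1, a2 in A.  Then r_A(n) counts
   the pairs (x, y) in P^2 with x = y + n, so Cauchy-Schwarz gives
   r_A(n) <= r_A(0), the multiplicative energy of A, and
   I_3(A) <= r_A(0)^2 sum_n r_A(n) <= r_A(0)^2 |A|^4.
   Apart from O(|A|^2) quadruples with a vanishing product, ab = cd says that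
   the points (c, a) and (b, d) of A^2 lie on one line through the origin,
   and replacing A by -A turns points with negative abscissa into points with
   positive abscissa on the same lines.  Solymosi's argument bounds the number
   k of lines carrying more than t points: for consecutive such slopes v < w,
   adding a point of the line of slope v to a point of the line of slope w
   gives (t+1)^2 distinct points of (A+A)^2 in the open cone between the two
   lines, so (k-1)(t+1)^2 <= |A+A|^2.  Summing over t bounds the energy by
   2 |A+A|^2 H_|A| + |A|^2, and H_N <= 1 + ln N. *)

Lemma count_sum (T : Type) (p : pred T) (s : seq T) : count p s = \sum_(x <- s) p x.
Proof. by rewrite -sum1_count big_mkcond; apply: eq_bigr => x _; case: (p x). Qed.

Lemma sum_nat_const_seq (T : Type) (s : seq T) (n : nat) : \sum_(x <- s) n = size s * n.
Proof. by rewrite big_const_seq count_predT iter_addn_0 mulnC. Qed.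

Lemma sum_pairs_pred (T : Type) (P : pred T) (s : seq T) :
  \sum_(a <- s) \sum_(b <- s) (P a + P b) = 2 * (size s * count P s).
Proof.
under eq_bigr do rewrite big_split /= sum_nat_const_seq -count_sum.
by rewrite big_split /= sum_nat_const_seq -big_distrr -count_sum /=; lia.
Qed.

Lemma sum_odd_ltn (m N : nat) : \sum_(t < N) (2 * t + 1) * (t < m) = minn m N ^ 2.
Proof.
elim: N => [|N IH]; first by rewrite big_ord0 minn0.
rewrite big_ord_recr /= IH; case: (ltnP N m) => h.
  by rewrite (minn_idPr h) muln1; lia.
by rewrite (minn_idPl (leqW h)) muln0 addn0.
Qed.

Lemma sum_sqr_layer (T : Type) (u : seq T) (f : T -> nat) (N : nat) :
  (forall v, f v <= N) ->
  \sum_(v <- u) f v ^ 2 = \sum_(t < N) (2 * t + 1) * count (fun v => t < f v) u.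
Proof.
move=> fN; under eq_bigr => v _ do rewrite -(minn_idPl (fN v)) -sum_odd_ltn.
by rewrite exchange_big; apply: eq_bigr => t _; rewrite count_sum big_distrr.
Qed.

Section QuadSum.
Variable T : Type.
Implicit Types (A : seq T) (F G : T -> T -> T -> T -> nat).

Definition quad_sum A F : nat :=
  \sum_(a <- A) \sum_(b <- A) \sum_(c <- A) \sum_(d <- A) F a b c d.

Lemma leq_quad_sum A F G :
  (forall a b c d, F a b c d <= G a b c d) -> quad_sum A F <= quad_sum A G.
Proof. by move=> FG; do 4![apply: leq_sum => ? _]; exact: FG. Qed.

Lemma quad_sumD A F G :
  quad_sum A (fun a b c d => F a b c d + G a b c d) = quad_sum A F + quad_sum A G.
Proof. by rewrite -big_split; do 3![apply: eq_bigr => ? _; rewrite -big_split]. Qed.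

Lemma quad_sum_mul A (f : T -> T -> nat) :
  quad_sum A (fun a b c d => f a b * f c d) = (\sum_(a <- A) \sum_(b <- A) f a b) ^ 2.
Proof.
rewrite -mulnn big_distrl; apply: eq_bigr => a _; rewrite big_distrl.
by apply: eq_bigr => b _; rewrite big_distrr; apply: eq_bigr => c _; rewrite big_distrr.
Qed.

End QuadSum.

Section Collisions.
Variable T : eqType.
Implicit Types s t u : seq T.

Definition collisions s t : nat := \sum_(x <- s) count_mem x t.

Definition energy s : nat := collisions s s.

Lemma sum_count_mem (F : T -> nat) u s : uniq u -> {subset s <= u} ->
  \sum_(x <- s) F x = \sum_(v <- u) count_mem v s * F v.
Proof.
move=> uu; elim: s => [|x s IH] su.
  by rewrite big_nil big1 // => v _; rewrite mul0n.
rewrite big_cons IH; last by move=> y ys; apply: su; rewrite inE ys orbT.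
under [RHS]eq_bigr => v _ do rewrite /= mulnDl.
rewrite big_split /=; congr (_ + _).
rewrite (bigD1_seq x) ?su ?mem_head //= eqxx mul1n big1 ?addn0 // => v vx.
by rewrite eq_sym (negbTE vx).
Qed.

Lemma collisionsE u s t : uniq u -> {subset s <= u} ->
  collisions s t = \sum_(v <- u) count_mem v s * count_mem v t.
Proof. exact: sum_count_mem. Qed.

Lemma energyE s : energy s = \sum_(v <- undup s) count_mem v s ^ 2.
Proof.
by rewrite /energy (@collisionsE (undup s)) ?undup_uniq // => x; rewrite mem_undup.
Qed.

Lemma collisionsC s t : collisions s t = collisions t s.
Proof.
rewrite /collisions; under eq_bigr do rewrite count_sum.
under [RHS]eq_bigr do rewrite count_sum.
by rewrite exchange_big; do 2![apply: eq_bigr => ? _]; rewrite /= eq_sym.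
Qed.

Lemma collisions_AMGM s t : 2 * collisions s t <= energy s + energy t.
Proof.
pose u := undup (s ++ t).
have uu : uniq u := undup_uniq _.
have su : {subset s <= u} by move=> x; rewrite mem_undup mem_cat => ->.
have tu : {subset t <= u} by move=> x; rewrite mem_undup mem_cat orbC => ->.
rewrite /energy !(collisionsE _ uu) // big_distrr -big_split /=.
by apply: leq_sum => v _; rewrite !mulnn; exact: (nat_Cauchy _ _).1.
Qed.

Lemma collisions_catl s1 s2 t :
  collisions (s1 ++ s2) t = collisions s1 t + collisions s2 t.
Proof. exact: big_cat. Qed.

Lemma collisions_catr s t1 t2 :
  collisions s (t1 ++ t2) = collisions s t1 + collisions s t2.
Proof. by rewrite /collisions -big_split; apply: eq_bigr => x _; rewrite count_cat. Qed.

Lemma energy_cat_le s t : energy (s ++ t) <= 2 * (energy s + energy t).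
Proof.
rewrite /energy collisions_catl !collisions_catr (collisionsC t s).
have := collisions_AMGM s t; rewrite /energy; lia.
Qed.

Lemma perm_energy s t : perm_eq s t -> energy s = energy t.
Proof.
move=> st; rewrite /energy /collisions (perm_big _ st).
by apply: eq_bigr => x _; exact/permP.
Qed.

Lemma collisions_uniq_le s t : uniq s -> collisions s t <= size t.
Proof.
move=> us; rewrite collisionsC /collisions -sum1_size; apply: leq_sum => y _.
by rewrite count_uniq_mem // leq_b1.
Qed.

Lemma collisions_allpairs (S1 S2 S3 S4 : Type) (f : S1 -> S2 -> T) (g : S3 -> S4 -> T)
    (r1 : seq S1) (r2 : seq S2) (r3 : seq S3) (r4 : seq S4) :
  collisions [seq f x y | x <- r1, y <- r2] [seq g z w | z <- r3, w <- r4] =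
  \sum_(x <- r1) \sum_(y <- r2) \sum_(z <- r3) \sum_(w <- r4) (g z w == f x y).
Proof.
rewrite /collisions big_allpairs_dep; do 2![apply: eq_bigr => ? _].
by rewrite count_sum big_allpairs_dep.
Qed.

Lemma energy_map (S : Type) (f : S -> T) (r : seq S) :
  energy (map f r) = \sum_(x <- r) \sum_(y <- r) (f y == f x).
Proof.
by rewrite /energy /collisions big_map; apply: eq_bigr => x _; rewrite count_map count_sum.
Qed.

End Collisions.

Lemma energy_map_inj (T T' : eqType) (f : T -> T') (s : seq T) : injective f ->
  energy (map f s) = energy s.
Proof.
move=> f_inj; rewrite /energy /collisions big_map; apply: eq_bigr => x _.
by rewrite count_map; apply: eq_count => y /=; rewrite inj_eq.
Qed.

Local Open Scope ring_scope.

Lemma layer_sum_le (R : realFieldType) (N S : nat) (k : nat -> nat) :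
  (forall t, (k t).-1 * t.+1 ^ 2 <= S ^ 2)%N ->
  ((\sum_(t < N) (2 * t + 1) * k t)%N)%:R <=
    2 * S%:R ^+ 2 * \sum_(t < N) (t.+1%:R : R)^-1 + N%:R ^+ 2.
Proof.
move=> kS.
have sum_odd : (\sum_(t < N) (2 * t + 1) = N ^ 2)%N.
  by rewrite -[in RHS](minnn N) -sum_odd_ltn; apply: eq_bigr => t _; rewrite ltn_ord muln1.
rewrite -[N%:R ^+ 2]natrX -sum_odd !natr_sum mulr_sumr -big_split /=; apply: ler_sum => t _.
have split_k : ((2 * t + 1) * k t <= (2 * t + 1) * (k t).-1 + (2 * t + 1))%N.
  by case: (k t) => /= *; lia.
have rich_k : ((2 * t + 1) * (k t).-1 * t.+1 <= 2 * S ^ 2)%N by have := kS t; nia.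
apply: le_trans (_ : ((2 * t + 1) * (k t).-1)%:R + (2 * t + 1)%:R <= _).
  by rewrite -natrD ler_nat.
by rewrite lerD2r ler_pdivlMr ?ltr0n // -natrX -!natrM ler_nat.
Qed.

Section Rays.
Variable R : realFieldType.
Implicit Types (A S : seq R) (v w : R) (p q x : R * R).

Definition pairs A := [seq (a, b) | a <- A, b <- A].
Definition pos_pairs A := [seq p <- pairs A | 0 < p.1].
Definition ratio p := p.2 / p.1.
Definition ray A v := [seq p <- pos_pairs A | p.2 == v * p.1].

Lemma mem_ray A v p : p \in ray A v -> [/\ p.1 \in A, p.2 \in A, 0 < p.1 & p.2 = v * p.1].
Proof.
rewrite !mem_filter => /and3P [/eqP ep2 p1_gt0 /allpairsP [[a b] /= [aA bA ep]]].
by move: ep2 p1_gt0; rewrite ep.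
Qed.

Lemma ray_uniq A v : uniq A -> uniq (ray A v).
Proof. by move=> uA; rewrite !filter_uniq // allpairs_uniq // => -[a b] [c d] _ _ [-> ->]. Qed.

Lemma size_ray A v : uniq A -> (size (ray A v) <= size A)%N.
Proof.
move=> uA; rewrite -(size_map fst); apply: uniq_leq_size.
  rewrite map_inj_in_uniq ?ray_uniq // => p q /mem_ray [_ _ _ ep] /mem_ray [_ _ _ eq].
  by case: p q ep eq => [a b] [c d] /= -> -> ->.
by move=> _ /mapP [p /mem_ray [? _ _ _] ->].
Qed.

Lemma count_ratio_pos_pairs A v : count_mem v (map ratio (pos_pairs A)) = size (ray A v).
Proof.
rewrite count_map size_filter; apply: eq_in_count => p.
rewrite mem_filter => /andP [p1_gt0 _] /=.
by rewrite /ratio -[v in _ == v]divr1 eqr_div ?lt0r_neq0 ?oner_neq0 // mulr1.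
Qed.

Definition ray_sums A v w := [seq p + q | p <- ray A v, q <- ray A w].

Fixpoint fan_sums A v (s : seq R) : seq (R * R) :=
  if s is w :: s' then ray_sums A v w ++ fan_sums A w s' else [::].

Lemma ray_sums_cone A v w x : v < w -> x \in ray_sums A v w ->
  [/\ 0 < x.1, v * x.1 < x.2 & x.2 < w * x.1].
Proof.
move=> vw /allpairsP [[p q] /= [/mem_ray [_ _ p1_gt0 ep] /mem_ray [_ _ q1_gt0 eq] ->]] /=.
rewrite ep eq; split; first by rewrite addr_gt0.
- by rewrite mulrDr ltrD2l !(mulrC _ q.1) ltr_pM2l.
- by rewrite mulrDr ltrD2r !(mulrC _ p.1) ltr_pM2l.
Qed.

Lemma ray_sums_sub A S v w : {subset [seq a + b | a <- A, b <- A] <= S} ->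
  {subset ray_sums A v w <= pairs S}.
Proof.
move=> AS _ /allpairsP [[p q] /= [/mem_ray [p1 p2 _ _] /mem_ray [q1 q2 _ _] ->]].
by apply/allpairsP; exists (p.1 + q.1, p.2 + q.2); split => //; apply: AS; apply/allpairsP;
  [exists (p.1, q.1) | exists (p.2, q.2)].
Qed.

Lemma ray_sums_uniq A v w : uniq A -> v < w -> uniq (ray_sums A v w).
Proof.
move=> uA vw; rewrite allpairs_uniq ?ray_uniq // => z z'.
move=> /allpairsP [[[a b] [c d]] [/mem_ray [_ _ _ /= eb] /mem_ray [_ _ _ /= ed] ->]].
move=> /allpairsP [[[a' b'] [c' d']] [/mem_ray [_ _ _ /= eb'] /mem_ray [_ _ _ /= ed'] ->]].
subst b d b' d' => /= -[sum1 sum2].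
have ec : c = c'.
  apply: (mulfI (_ : w - v != 0)); first by rewrite subr_eq0 gt_eqF.
  have : v * (a + c) = v * (a' + c') by rewrite sum1.
  by move: sum2; lra.
by move: sum1; rewrite ec => /addIr ->.
Qed.

Lemma fan_sums_cone A v s x : path <%O v s -> x \in fan_sums A v s ->
  0 < x.1 /\ v * x.1 < x.2.
Proof.
elim: s v => [|w s IH] v //= /andP [vw ws]; rewrite mem_cat => /orP [].
  by case/(ray_sums_cone vw).
case/(IH _ ws) => x1_gt0 wx; split => //.
by apply: lt_trans wx; rewrite ltr_pM2r.
Qed.

Lemma fan_sums_uniq A v s : uniq A -> path <%O v s -> uniq (fan_sums A v s).
Proof.
move=> uA; elim: s v => [|w s IH] v //= /andP [vw ws].
rewrite cat_uniq ray_sums_uniq ?IH //= andbT; apply/hasPn => x /(fan_sums_cone ws) [_ wx].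
by apply/negP => /(ray_sums_cone vw) [_ _]; rewrite lt_gtF.
Qed.

Lemma fan_sums_sub A S v s : {subset [seq a + b | a <- A, b <- A] <= S} ->
  {subset fan_sums A v s <= pairs S}.
Proof.
move=> AS; elim: s v => [|w s IH] v x //=.
by rewrite mem_cat => /orP [/(ray_sums_sub AS) | /IH].
Qed.

Lemma size_fan_sums A v s (m : nat) : {in v :: s, forall w, m <= size (ray A w)}%N ->
  (size s * m ^ 2 <= size (fan_sums A v s))%N.
Proof.
elim: s v => [|w s IH] v //= rich.
rewrite size_cat size_allpairs mulSn leq_add //.
  by rewrite -mulnn leq_mul ?rich // !inE eqxx ?orbT.
by apply: IH => u us; apply: rich; rewrite inE us orbT.
Qed.

Definition rich_rays A (t : nat) : nat :=
  count (fun v => t < size (ray A v))%N (undup (map ratio (pos_pairs A))).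

Lemma rich_rays_le A S (t : nat) : uniq A -> {subset [seq a + b | a <- A, b <- A] <= S} ->
  ((rich_rays A t).-1 * t.+1 ^ 2 <= size S ^ 2)%N.
Proof.
move=> uA AS; rewrite /rich_rays -size_filter -(size_sort <=%O); set V := sort _ _.
have : sorted <%O V by rewrite sort_lt_sorted; exact/filter_uniq/undup_uniq.
have : {in V, forall v, t.+1 <= size (ray A v)}%N.
  by move=> v; rewrite mem_sort mem_filter => /andP [].
case: V => [_ _ //|v s rich vs].
rewrite -[(size S ^ 2)%N]mulnn -(size_allpairs pair) (leq_trans (size_fan_sums rich)) //.
by apply: uniq_leq_size; [exact: fan_sums_uniq | exact: fan_sums_sub].
Qed.
End Rays.

Arguments ratio {R}.

Section RatioEnergy.
Variable R : realFieldType.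
Implicit Types (A S : seq R) (p : R * R).

Lemma pos_ratio_energy_le A S : uniq A -> {subset [seq a + b | a <- A, b <- A] <= S} ->
  (energy (map ratio (pos_pairs A)))%:R <=
    2 * (size S)%:R ^+ 2 * \sum_(t < size A) (t.+1%:R : R)^-1 + (size A)%:R ^+ 2.
Proof.
move=> uA AS; rewrite energyE; under eq_bigr do rewrite count_ratio_pos_pairs.
rewrite (@sum_sqr_layer _ _ (fun v => size (ray A v)) (size A)) => [|v]; last exact: size_ray.
by apply: (@layer_sum_le _ _ _ (rich_rays A)) => t; exact: rich_rays_le.
Qed.

Definition nz_pairs A := [seq p <- pairs A | p.1 != 0].

Lemma ratioN p : ratio (- p) = ratio p.
Proof. by rewrite /ratio /= invrN mulrNN. Qed.

Lemma pairsN A : pairs (map -%R A) = map -%R (pairs A).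
Proof. by rewrite /pairs map_allpairs allpairs_mapl allpairs_mapr. Qed.

Lemma perm_nz_pairs A :
  perm_eq (nz_pairs A) (pos_pairs A ++ map -%R (pos_pairs (map -%R A))).
Proof.
rewrite /pos_pairs pairsN filter_map -map_comp (eq_map opprK) map_id.
rewrite -(perm_filterC (fun p => 0 < p.1) (nz_pairs A)) -!filter_predI.
apply: perm_cat; apply/permP => a; congr (count a _); apply: eq_filter => p /=.
  by case: ltrgt0P.
by rewrite oppr_gt0; case: ltrgt0P.
Qed.

Lemma nz_ratio_energy_le A : (energy (map ratio (nz_pairs A)) <=
  2 * (energy (map ratio (pos_pairs A)) + energy (map ratio (pos_pairs (map -%R A)))))%N.
Proof.
rewrite (perm_energy (perm_map ratio (perm_nz_pairs A))) map_cat -map_comp (eq_map ratioN).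
exact: energy_cat_le.
Qed.

Definition prods A := [seq a * b | a <- A, b <- A].

Lemma eq_mul_le_ratio (a b c d : R) :
  ((c * d == a * b)%R <= ((a == 0%R) + (b == 0%R)) * ((c == 0%R) + (d == 0%R))
                         + [&& c != 0%R, b != 0%R & (d / b == a / c)%R])%N.
Proof.
have [cd_ab|] := eqVneq (c * d) (a * b); last by [].
have [c0|c0] := eqVneq c 0.
  have /eqP : a * b = 0 by rewrite -cd_ab c0 mul0r.
  by rewrite mulf_eq0 => /orP [] /eqP ->; rewrite eqxx /=; lia.
have [b0|b0] := eqVneq b 0.
  have /eqP : c * d = 0 by rewrite cd_ab b0 mulr0.
  by rewrite mulf_eq0 (negbTE c0) => /eqP ->; rewrite !eqxx /=; lia.
by rewrite eqr_div // mulrC cd_ab eqxx /=; lia.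
Qed.

Lemma energy_nz_ratioE A : energy (map ratio (nz_pairs A)) =
  quad_sum A (fun a b c d => [&& c != 0, b != 0 & d / b == a / c]).
Proof.
rewrite energy_map /nz_pairs big_filter big_mkcond big_allpairs /quad_sum.
under [RHS]eq_bigr do rewrite exchange_big.
rewrite [RHS]exchange_big; apply: eq_bigr => c _; apply: eq_bigr => a _ /=.
have [c0|c0] := eqVneq c 0; first by rewrite /= big1 // => b _; rewrite big1.
rewrite big_filter big_mkcond big_allpairs; apply: eq_bigr => b _; apply: eq_bigr => d _.
by rewrite /ratio /=; case: eqP.
Qed.

Lemma energy_prods_le A : uniq A ->
  (energy (prods A) <= (2 * size A) ^ 2 + energy (map ratio (nz_pairs A)))%N.
Proof.
move=> uA; rewrite {1}/energy collisions_allpairs energy_nz_ratioE.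
apply: leq_trans (leq_quad_sum _ eq_mul_le_ratio) _.
rewrite quad_sumD leq_add2r quad_sum_mul (sum_pairs_pred (fun a : R => a == 0)).
have : (count (fun a : R => a == 0%R) A <= 1)%N.
  exact: leq_trans (eq_leq (count_uniq_mem 0 uA)) (leq_b1 _).
by move=> zero_le1; rewrite leq_exp2r // leq_mul2l -[leqRHS]muln1 leq_mul2l zero_le1 orbT.
Qed.
End RatioEnergy.

Section Logarithm.
Variable R : realType.

Lemma ln_ge_1_subV (x : R) : 0 < x -> 1 - x^-1 <= ln x.
Proof.
move=> x_gt0; have inv_gt0 : 0 < x^-1 by rewrite invr_gt0.
have : -1 < x^-1 - 1 by lra.
by move=> /le_ln1Dx; rewrite [1 + _]addrC subrK lnV ?posrE //; lra.
Qed.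

Lemma ln2_ge_half : 2^-1 <= ln (2 : R).
Proof. by have := @ln_ge_1_subV 2 (ltr0Sn _ 1); lra. Qed.

Lemma harmonic_le_ln (N : nat) : (0 < N)%N ->
  \sum_(t < N) (t.+1%:R : R)^-1 <= 1 + ln N%:R.
Proof.
elim: N => [|[|N] IH] // _; first by rewrite big_ord1 ln1 invr1 addr0.
have step : (N.+2%:R : R)^-1 <= ln N.+2%:R - ln N.+1%:R.
  have frac_gt0 : (0 : R) < N.+2%:R / N.+1%:R by rewrite divr_gt0 ?ltr0n.
  rewrite -ln_div ?posrE ?ltr0n //; apply: le_trans (ln_ge_1_subV frac_gt0).
  rewrite invf_div [N.+2%:R]mulrSr; move: (N.+1%:R : R) (ltr0Sn R N) => a a_gt0.
  have a1_neq0 : a + 1 != 0 by apply: lt0r_neq0; rewrite addr_gt0.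
  by have -> : 1 - a / (a + 1) = (a + 1)^-1 by field.
by rewrite big_ord_recr /= -[ln N.+2%:R](subrKC (ln N.+1%:R)) addrA lerD ?IH.
Qed.
End Logarithm.

Section QuadrupleCounts.
Variable R : realType.
Implicit Types (A : seq R) (n : int).

Lemma rA_collisions A n : rA A n = collisions (prods A) [seq x + n%:~R | x <- prods A].
Proof.
rewrite /rA /quad_vals count_map count_sum big_allpairs /collisions.
apply: eq_bigr => x _; rewrite count_map count_sum; apply: eq_bigr => y _ /=.
by rewrite subr_eq addrC eq_sym.
Qed.

Lemma rA0_energy A : rA A 0 = energy (prods A).
Proof. by rewrite rA_collisions (eq_map (fun x => addr0 x)) map_id. Qed.

Lemma rA_le_rA0 A n : (rA A n <= rA A 0)%N.
Proof.
have shift_inj : injective (fun x : R => x + n%:~R) by exact: addIr.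
have := collisions_AMGM (prods A) [seq x + n%:~R | x <- prods A].
by rewrite energy_map_inj // -rA_collisions -rA0_energy addnn -mul2n leq_pmul2l.
Qed.

Lemma I3_le A : (I3 A <= rA A 0 ^ 2 * size A ^ 4)%N.
Proof.
apply: leq_trans (_ : _ <= \sum_(n <- rA_support A) rA A 0 ^ 2 * rA A n)%N _.
  by apply: leq_sum => n _; rewrite expnSr leq_mul2r leq_exp2r // rA_le_rA0 orbT.
rewrite -big_distrr leq_mul2l; apply/orP; right.
have -> : (\sum_(n <- rA_support A) rA A n
           = collisions (map intr (rA_support A)) (quad_vals A))%N.
  by rewrite /collisions big_map.
apply: leq_trans (collisions_uniq_le _ _) _.
  by rewrite map_inj_uniq ?undup_uniq //; exact: intr_inj.
by rewrite /quad_vals !size_map !size_allpairs -!mulnA !expnS expn0 muln1.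
Qed.

Lemma rA0_le_sumset A : uniq A ->
  (rA A 0)%:R <= 8 * (size A)%:R ^+ 2
                 + 8 * (size (sumset A))%:R ^+ 2 * \sum_(t < size A) (t.+1%:R : R)^-1.
Proof.
move=> uA.
have sums_sub : {subset [seq a + b | a <- A, b <- A] <= sumset A}.
  by move=> x; rewrite mem_undup.
have sumsN_sub : {subset [seq a + b | a <- map -%R A, b <- map -%R A] <= map -%R (sumset A)}.
  move=> _ /allpairsP [[_ _] /= [/mapP [a aA ->] /mapP [b bA ->] ->]].
  by rewrite -opprD map_f // sums_sub //; apply/allpairsP; exists (a, b).
have := pos_ratio_energy_le uA sums_sub.
have uAN : uniq (map -%R A) by rewrite map_inj_uniq //; exact: oppr_inj.
have := pos_ratio_energy_le uAN sumsN_sub; rewrite !size_map.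
have := leq_trans (energy_prods_le uA) (leq_add (leqnn _) (nz_ratio_energy_le A)).
rewrite -rA0_energy -(ler_nat R) !(natrD, natrM, natrX); lra.
Qed.

Lemma rA0_le A (K : R) : uniq A -> A != [::] -> 1 <= K ->
  (size (sumset A))%:R = K * (size A)%:R ->
  (rA A 0)%:R <= 32 * (K ^+ 2 * (size A)%:R ^+ 2 * ln (2 * (size A)%:R)).
Proof.
move=> uA A_neq0 K_ge1 sizeS.
have N_gt0 : (0 < size A)%N by rewrite lt0n size_eq0.
have := rA0_le_sumset uA; rewrite sizeS lnM ?posrE ?ltr0n // exprMn.
have := harmonic_le_ln R N_gt0; have := @ln2_ge_half R.
have : 0 <= ln (size A)%:R :> R by rewrite ln_ge0 // ler1n.
have : 1 <= K ^+ 2 by rewrite expr_ge1 // (le_trans ler01).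
set H := \sum_(t < _) _; set lnN := ln (size A)%:R; set N := (size A)%:R.
move=> K2_ge1 lnN_ge0 ln2_ge H_le.
have N2_ge0 : 0 <= N ^+ 2 by rewrite sqr_ge0.
have X_ge0 : 0 <= K ^+ 2 * N ^+ 2 by rewrite mulr_ge0 // (le_trans ler01).
have : N ^+ 2 <= K ^+ 2 * N ^+ 2 by rewrite ler_peMl.
have : K ^+ 2 * N ^+ 2 * H <= K ^+ 2 * N ^+ 2 * (1 + lnN) by rewrite ler_wpM2l.
have : K ^+ 2 * N ^+ 2 * 2^-1 <= K ^+ 2 * N ^+ 2 * ln 2 by rewrite ler_wpM2l.
have : 0 <= K ^+ 2 * N ^+ 2 * lnN by rewrite mulr_ge0.
move: (K ^+ 2 * N ^+ 2) => X; lra.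
Qed.
End QuadrupleCounts.

Theorem lemma6p1 :
  exists C : nat, forall (R : realType) (A : seq R) (K : R),
    uniq A -> A != [::] -> 1 <= K ->
    (size (sumset A))%:R = K * (size A)%:R ->
    [/\ (forall n : int, (rA A n <= rA A 0)%N),
        (rA A 0)%:R <= C%:R * K ^+ 2 * (size A)%:R ^+ 2 * ln (2 * (size A)%:R)
      & (I3 A)%:R <= C%:R * K ^+ 4 * (size A)%:R ^+ 8 * (ln (2 * (size A)%:R)) ^+ 2].
Proof.
exists 1024%N => R A K uA A_neq0 K_ge1 sizeS.
have r0_le := rA0_le uA A_neq0 K_ge1 sizeS.
have I3_le_r0 : (I3 A)%:R <= (rA A 0)%:R ^+ 2 * (size A)%:R ^+ 4 :> R.
  by rewrite -!natrX -natrM ler_nat I3_le.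
set X := K ^+ 2 * _ * _ in r0_le.
have X_ge0 : 0 <= X.
  have N_ge1 : 1 <= (size A)%:R :> R by rewrite ler1n lt0n size_eq0.
  by rewrite /X !mulr_ge0 ?exprn_ge0 ?(le_trans ler01 K_ge1) // ln_ge0 //; lra.
split; first exact: rA_le_rA0.
  rewrite (_ : _ * _ * _ * _ = 1024 * X); first lra.
  by rewrite /X !mulrA.
have r0_sq : (rA A 0)%:R ^+ 2 <= (32 * X) ^+ 2.
  by rewrite ler_pXn2r // ?nnegrE ?ler0n //; lra.
apply: le_trans I3_le_r0 _.
rewrite (_ : _ * _ * _ * _ = (32 * X) ^+ 2 * (size A)%:R ^+ 4).
  by apply: ler_wpM2r r0_sq; rewrite exprn_ge0.
by rewrite /X; ring.
Qed.
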